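(* Let $g$ be a function from strict partitions to $\mathbb{C}$ and let $\mu$ be a strict partition. Then for every $n\ge0$, $$\sum_{|\lambda/\mu|=n}2^{|\lambda|-|\mu|-\ell(\lambda)+\ell(\mu)}f_{\lambda/\mu}\,g(\lambda)=\sum_{k=0}^n\binom{n}{k}D^kg(\mu)$$ and $$D^ng(\mu)=\sum_{k=0}^n(-1)^{n+k}\binom{n}{k}\sum_{|\lambda/\mu|=k}2^{|\lambda|-|\mu|-\ell(\lambda)+\ell(\mu)}f_{\lambda/\mu}\,g(\lambda),$$ where $\sum_{|\lambda/\mu|=k}$ ranges over strict partitions $\lambda\supseteq\mu$ with $|\lambda|-|\mu|=k$. In particular, if there is a positive integer $r$ such that $D^rg(\lambda)=0$ for every strict partition $\lambda$, then the left-hand side of the first identity is a polynomial in $n$ of degree at most $r-1$.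
   Context: A strict partition is a finite strictly decreasing sequence of positive integers $\lambda=(\lambda_1>\cdots>\lambda_\ell)$ (the empty sequence is allowed); $|\lambda|=\sum_i\lambda_i$, $\ell(\lambda)=\ell$, and $\lambda_i=0$ for $i>\ell(\lambda)$. The (shifted Young) diagram of $\lambda$ is the set of boxes $(i,j)$ with $1\le i\le\ell(\lambda)$, $i+1\le j\le i+\lambda_i$; $\lambda$ is identified with its diagram. Write $\lambda\supseteq\mu$ if $\lambda_i\ge\mu_i$ for all $i$; $\lambda/\mu$ is the set of boxes of $\lambda$ not in $\mu$, and $|\lambda/\mu|=|\lambda|-|\mu|$. $f_{\lambda/\mu}$ is the number of standard shifted Young tableaux of shape $\lambda/\mu$, i.e. bijective fillings of the boxes of $\lambda/\mu$ with $1,\dots,|\lambda/\mu|$ increasing from left to right along rows and from top to bottom along columns ($f_{\mu/\mu}=1$). For a strict partition $\lambda$, $\lambda^+$ denotes any strict partition obtained from $\lambda$ by adding one box. The difference operator is $$Dg(\lambda)=\sum_{\lambda^+:\ \ell(\lambda^+)>\ell(\lambda)}g(\lambda^+)+2\sum_{\lambda^+:\ \ell(\lambda^+)=\ell(\lambda)}g(\lambda^+)-g(\lambda),$$ and $D^k$ is its $k$-th iterate ($D^0g=g$). *)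

From mathcomp Require Import all_boot all_order all_algebra.
From mathcomp Require Import complex.
From mathcomp Require Import Rstruct.
Import ComplexField.
Set Implicit Arguments. Unset Strict Implicit. Unset Printing Implicit Defensive.
Import Order.TTheory GRing.Theory Num.Theory.
Local Open Scope ring_scope.

Notation C := (complex Rdefinitions.R).

(* A strict partition is represented by the sequence of its parts
   [:: l_1; ...; l_ell], strictly decreasing and positive. *)
Definition strict (l : seq nat) : bool :=
  sorted (fun a b : nat => b < a)%N l && all (fun x : nat => 0 < x)%N l.

Definition psize (l : seq nat) : nat := sumn l.
Definition plen (l : seq nat) : nat := size l.

(* lambda_i with lambda_i = 0 for i > ell(lambda); indices are 0-based. *)
Definition part (l : seq nat) (i : nat) : nat := nth 0%N l i.

Definition contains (l m : seq nat) : bool :=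
  all (fun i => part m i <= part l i)%N (iota 0 (maxn (size l) (size m))).

(* Boxes of the shifted diagram: (i,j), 1 <= i <= ell, i+1 <= j <= i+l_i. *)
Definition boxes (l : seq nat) : seq (nat * nat) :=
  flatten [seq [seq (i.+1, j) | j <- iota (i.+2) (part l i)] | i <- iota 0 (size l)].

Definition skew_boxes (l m : seq nat) : seq (nat * nat) :=
  [seq b <- boxes l | b \notin boxes m].

(* An ordering s of the boxes of lambda/mu encodes the bijective filling
   b |-> index b s + 1.  It is standard iff entries increase left to right
   along rows and top to bottom along columns. *)
Definition standard_order (s : seq (nat * nat)) : bool :=
  all (fun b => all (fun b' =>
        (((b.1 == b'.1) && (b.2 < b'.2)%N) || ((b.2 == b'.2) && (b.1 < b'.1)%N))
          ==> (index b s < index b' s)%N) s) s.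

Definition nsyt (l m : seq nat) : nat :=
  count standard_order (permutations (skew_boxes l m)).

Fixpoint sp_bounded (m N : nat) : seq (seq nat) :=
  match m with
  | 0 => if N == 0%N then [:: [::]] else [::]
  | m'.+1 => sp_bounded m' N ++
             (if (m'.+1 <= N)%N then [seq m'.+1 :: s | s <- sp_bounded m' (N - m'.+1)]
              else [::])
  end.

Definition strict_parts (N : nat) : seq (seq nat) := sp_bounded N N.

(* All strict partitions lambda^+ obtained from lambda by adding one box:
   add a box at the end of row i (i = ell(lambda) meaning a new row of
   length 1), keeping those results that are strict partitions. *)
Definition add_box (l : seq nat) : seq (seq nat) :=
  [seq l' <- [seq incr_nth l i | i <- iota 0 (size l).+1] | strict l'].

Definition Dop (g : seq nat -> C) (l : seq nat) : C :=
  \sum_(l' <- add_box l | (size l < size l')%N) g l'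
  + 2%:R * \sum_(l' <- add_box l | size l' == size l) g l'
  - g l.

Definition Dpow (k : nat) (g : seq nat -> C) : seq nat -> C := iter k Dop g.

Definition weight (l m : seq nat) : int :=
  (psize l)%:Z - (psize m)%:Z - (plen l)%:Z + (plen m)%:Z.

Definition Ssum (g : seq nat -> C) (m : seq nat) (n : nat) : C :=
  \sum_(l <- strict_parts (psize m + n) | contains l m)
     (2%:R : C) ^ (weight l m) * (nsyt l m)%:R * g l.

From mathcomp Require Import all_boot all_order all_algebra.
From mathcomp Require Import complex Rstruct.
From mathcomp Require Import zify ring.
From Stdlib Require Import FunctionalExtensionality.
Import ComplexField.
Import Order.TTheory GRing.Theory Num.Theory.
Set Implicit Arguments. Unset Strict Implicit. Unset Printing Implicit Defensive.

(** Let [U = D + 1], so that [U g(λ) = Σ_{λ⁺} 2^{|λ⁺|-|λ|-ℓ(λ⁺)+ℓ(λ)} g(λ⁺)].  In a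
    standard filling of [λ/μ] the entry 1 sits in a box with no box before it, i.e. in
    a box whose addition to [μ] gives a strict [μ⁺ ⊆ λ]; hence
    [f_{λ/μ} = Σ_{μ⁺ ⊆ λ} f_{λ/μ⁺}], and by induction on [n] the left-hand side of the
    first identity is [Uⁿ g(μ)].  Both identities are then the binomial expansions of
    [(D + 1)ⁿ] and [(U - 1)ⁿ].  If [D^r g = 0], only the terms [k < r] survive in the
    first one, and [C(n, k)] is a polynomial of degree [k] in [n]. *)

Section StrictPartitions.

Implicit Types (l m p : seq nat) (i j k x : nat).

Lemma strict_cons x t : strict (x :: t) = (part t 0 < x)%N && strict t.
Proof.
case: t => [|y t]; rewrite /strict /= ?andbT //.
by case: (ltnP y x) => //= yx; rewrite (leq_ltn_trans (leq0n y) yx).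
Qed.

Lemma strictP l :
  reflect (forall i, (i < size l)%N -> (part l i.+1 < part l i)%N) (strict l).
Proof.
elim: l => [|x t IH]; first exact: ReflectT.
rewrite strict_cons; apply: (iffP andP) => [[h0 /IH h] [|i] /= hi|h].
- exact: h0.
- exact: h.
by split; [exact: (h 0%N) | apply/IH => i; exact: (h i.+1)].
Qed.

Lemma part_default l i : (size l <= i)%N -> part l i = 0%N.
Proof. by move=> h; rewrite /part nth_default. Qed.

Lemma part_incr_nth l i j : part (incr_nth l i) j = ((i == j) + part l j)%N.
Proof. exact: nth_incr_nth. Qed.

Lemma strict_part_gt0 l i : strict l -> (0 < part l i)%N = (i < size l)%N.
Proof.
move=> /strictP h; case: (ltnP i (size l)) => hi; last by rewrite part_default.
by have := h _ hi; case: (part l i).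
Qed.

Lemma strict_part_gap l j k : strict l -> (j <= k)%N -> (k < size l)%N ->
  (part l k + (k - j) <= part l j)%N.
Proof.
move=> sl; elim: k => [|k IH] hjk hk; first by move: hjk; rewrite leqn0 => /eqP->; lia.
case: (ltnP j k.+1) => h; last by rewrite (_ : j = k.+1) ?subnn ?addn0 //; lia.
by have := IH h (ltnW hk); have := strictP _ sl k (ltnW hk); lia.
Qed.

Lemma strict_all_lt x t : strict (x :: t) -> all (fun y => y < x)%N t.
Proof.
case/andP => /= + _; rewrite path_sortedE; first by case/andP.
by move=> y a b h1 h2; exact: ltn_trans h2 h1.
Qed.

(* Rows are indexed from 0 and [i = size l] opens a new row: the lengthened row
   must stay shorter than the one above it. *)
Lemma strict_incr_nth l i : strict l ->
  strict (incr_nth l i) = (i <= size l)%N && ((i == 0%N) || ((part l i).+1 < part l i.-1)%N).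
Proof.
move=> sl; have hl := strictP _ sl.
apply/idP/idP => [/strictP h|/andP[hi hc]].
- case: (ltnP i (size l)) => hi /=.
    rewrite (ltnW hi) /=; case: (posnP i) => [->//|ip]; rewrite orbC /=.
    have := h i.-1; rewrite size_incr_nth hi prednK // !part_incr_nth => /(_ (ltnW hi)).
    lia.
  case: (posnP i) => [->|ip]; first by rewrite /=; lia.
  have := h i.-1; rewrite size_incr_nth (ltnNge i (size l)) hi prednK // !part_incr_nth /=.
  move=> /(_ (leqnSn _)); rewrite (part_default hi).
  case: (ltnP (size l) i) => h2; first by rewrite (part_default (l:=l) (i:=i.-1)); lia.
  have -> : i = size l by lia.
  by rewrite -(part_default (leqnn (size l))); lia.
- apply/strictP => j; rewrite size_incr_nth !part_incr_nth.
  case: (ltnP i (size l)) => hs hj.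
    have := hl j hj; case: (eqVneq i j.+1) => [e|]; last by lia.
    by move: hc; rewrite e /=; lia.
  have ei : i = size l by lia.
  case: (eqVneq j i) => [->|nj]; first by rewrite (part_default (l:=l) (i:=i.+1)); lia.
  case: (eqVneq i j.+1) => [e|ne]; last by have := hl j; lia.
  by move: hc; rewrite e (part_default (l:=l) (i:=j.+1)) /=; lia.
Qed.

Lemma containsP l m : reflect (forall i, part m i <= part l i)%N (contains l m).
Proof.
apply: (iffP allP) => [h i|h i _]; last exact: h.
case: (ltnP i (maxn (size l) (size m))) => hi; first by apply: h; rewrite mem_iota.
by rewrite part_default // (leq_trans (leq_maxr _ _) hi).
Qed.

Lemma contains_refl m : contains m m.
Proof. by apply/containsP. Qed.

Lemma contains_trans l m p : contains l m -> contains m p -> contains l p.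
Proof.
move=> /containsP h1 /containsP h2; apply/containsP => j.
exact: leq_trans (h2 j) (h1 j).
Qed.

Lemma contains_incr_nth m i : contains (incr_nth m i) m.
Proof. by apply/containsP => j; rewrite part_incr_nth leq_addl. Qed.

Lemma psize_incr_nth l i : psize (incr_nth l i) = (psize l).+1.
Proof.
rewrite /psize; elim: l i => [|x t IH] [|i] //=; first by elim: i => //= i ->.
by rewrite IH addnS.
Qed.

Lemma psizeE l K : (size l <= K)%N -> psize l = \sum_(i < K) part l i.
Proof.
elim: l K => [|x t IH] K hK; first by rewrite big1 // => i _; rewrite /part nth_nil.
by case: K hK => // K hK; rewrite big_ord_recl /= (IH K hK).
Qed.

Lemma contains_psize_eq l m : strict l -> strict m -> contains l m ->
  psize l = psize m -> l = m.
Proof.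
move=> sl sm /containsP clm e.
set K := maxn (size l) (size m).
have hp i : part l i = part m i.
  case: (ltnP i K) => hi; last first.
    by rewrite !part_default //; apply: leq_trans hi; rewrite ?leq_maxl ?leq_maxr.
  have : (\sum_(j < K) (part l j - part m j) == 0)%N.
    rewrite sumnB; last by move=> j _; exact: clm.
    by rewrite -!psizeE ?leq_maxl ?leq_maxr // e subnn.
  rewrite sum_nat_eq0 => /forallP /(_ (Ordinal hi)) /=.
  by have := clm i; lia.
have hs : size l = size m.
  have := strict_part_gt0 (size l) sl; have := strict_part_gt0 (size l) sm.
  have := strict_part_gt0 (size m) sl; have := strict_part_gt0 (size m) sm.
  rewrite !hp !ltnn; lia.
by apply: (eq_from_nth (x0 := 0%N) hs) => i _; exact: hp.
Qed.

End StrictPartitions.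

Section ShiftedDiagrams.

Implicit Types (l m : seq nat) (i : nat) (b x : nat * nat).

Lemma mem_boxes l x :
  (x \in boxes l) = [&& (0 < x.1)%N, (x.1 < x.2)%N & (x.2 <= x.1 + part l x.1.-1)%N].
Proof.
case: x => a c /=; apply/idP/idP.
  case/flatten_mapP => i; rewrite mem_iota => /andP[_ hi] /mapP [j]; rewrite mem_iota.
  by move=> /andP[h1 h2] [-> ->] /=; lia.
case/and3P => ha hac hc.
have hi : (a.-1 < size l)%N.
  by rewrite ltnNge; apply/negP => hs; move: hc; rewrite part_default //; lia.
apply/flatten_mapP; exists a.-1; first by rewrite mem_iota.
by apply/mapP; exists c; [rewrite mem_iota; lia | rewrite prednK].
Qed.

Lemma uniq_flatten_tagged (T : eqType) (tag : T -> nat) (r : seq nat) (f : nat -> seq T) :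
  uniq r -> (forall i, uniq (f i)) -> (forall i (t : T), t \in f i -> tag t = i) ->
  uniq (flatten (map f r)).
Proof.
elim: r => //= i r IH /andP[ir ur] uf tf; rewrite cat_uniq uf IH // andbT.
apply/hasPn => t /flatten_mapP [k kr tk]; apply/negP => ti.
by move: ir; rewrite -(tf _ _ ti) (tf _ _ tk) kr.
Qed.

Lemma boxes_uniq l : uniq (boxes l).
Proof.
apply: (@uniq_flatten_tagged _ (fun b : nat * nat => b.1.-1)); first exact: iota_uniq.
  by move=> i; rewrite map_inj_uniq ?iota_uniq // => x y [].
by move=> i x /mapP [j _ ->].
Qed.

Lemma skew_boxes_uniq l m : uniq (skew_boxes l m).
Proof. exact: filter_uniq (boxes_uniq l). Qed.

Lemma mem_skew_boxes l m x :
  (x \in skew_boxes l m) = (x \in boxes l) && (x \notin boxes m).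
Proof. by rewrite mem_filter andbC. Qed.

Lemma skew_boxes_id m : skew_boxes m m = [::].
Proof. by apply/eqP; rewrite -[_ == _]negbK -has_filter; apply/hasPn => x ->. Qed.

(* The box that [incr_nth m i] adds to [m]; diagram rows are numbered from 1. *)
Definition next_box m i : nat * nat := (i.+1, i.+2 + part m i).

Lemma mem_boxes_incr_nth m i x :
  x \in boxes (incr_nth m i) = (x \in boxes m) || (x == next_box m i).
Proof.
case: x => a c; rewrite !mem_boxes part_incr_nth /next_box xpair_eqE /=.
by case: (eqVneq i a.-1) => [->|ne]; lia.
Qed.

Lemma skew_boxes_incr_nth l m i :
  perm_eq (rem (next_box m i) (skew_boxes l m)) (skew_boxes l (incr_nth m i)).
Proof.
apply: uniq_perm; [exact: rem_uniq (skew_boxes_uniq _ _)|exact: skew_boxes_uniq|].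
move=> x; rewrite (mem_rem_uniq _ (skew_boxes_uniq _ _)) inE !mem_skew_boxes.
by rewrite mem_boxes_incr_nth; case: (x == next_box m i); rewrite /= ?orbT ?orbF ?andbF // andbC.
Qed.

Lemma skew_boxes_neq_nil l m : (psize m < psize l)%N -> skew_boxes l m != [::].
Proof.
move=> hlt; apply/eqP => e; move: hlt; apply/negP; rewrite -leqNgt.
rewrite !(psizeE (K := maxn (size l) (size m))) ?leq_maxl ?leq_maxr //.
apply: leq_sum => i _; rewrite leqNgt; apply/negP => hi.
have : next_box m i \in skew_boxes l m by rewrite mem_skew_boxes !mem_boxes /=; lia.
by rewrite e.
Qed.

End ShiftedDiagrams.

Section StandardOrders.

Implicit Types (b x y : nat * nat) (s t : seq (nat * nat)).

Definition box_before b b' : bool :=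
  ((b.1 == b'.1) && (b.2 < b'.2)%N) || ((b.2 == b'.2) && (b.1 < b'.1)%N).

Lemma box_before_irr b : box_before b b = false.
Proof. by rewrite /box_before !ltnn !andbF. Qed.

Lemma standard_orderE s : standard_order s =
  all (fun x => all (fun y => box_before x y ==> (index x s < index y s)%N) s) s.
Proof. by []. Qed.

Lemma standard_order_cons b t : b \notin t ->
  standard_order (b :: t) = ~~ has (box_before^~ b) t && standard_order t.
Proof.
move=> bt.
have idx x : x \in t -> index x (b :: t) = (index x t).+1.
  by move=> xt /=; case: eqP => // ebx; move: bt; rewrite ebx xt.
have inbt x : x \in t -> x \in b :: t by rewrite inE orbC => ->.
have i0 : index b (b :: t) = 0%N by rewrite /= eqxx.
rewrite !standard_orderE; apply/idP/idP.
  move/allP => H; apply/andP; split.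
    apply/hasPn => x xt; have := allP (H x (inbt _ xt)) b (mem_head _ _).
    by rewrite idx // i0 ltn0 implybF.
  apply/allP => x xt; apply/allP => y yt.
  by have := allP (H x (inbt _ xt)) y (inbt _ yt); rewrite !idx.
case/andP => /hasPn hn /allP st.
apply/allP => x; rewrite inE => /orP[/eqP->|xt]; apply/allP => y;
  rewrite inE => /orP[/eqP->|yt].
- by rewrite box_before_irr.
- by rewrite i0 (idx y yt) implybT.
- by rewrite (negbTE (hn x xt)).
- by rewrite !idx //; have := allP (st x xt) y yt.
Qed.

(* A standard order starts with a box having no predecessor. *)
Lemma count_standard_permutations s : uniq s -> s != [::] ->
  count standard_order (permutations s) =
  (\sum_(b <- s | ~~ has (box_before^~ b) s) count standard_order (permutations (rem b s)))%N.
Proof.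
move=> us ns.
rewrite (permP (permutationsE _)); last by rewrite lt0n size_eq0.
rewrite count_flatten sumnE big_map big_map undup_id // big_mkcond [RHS]big_mkcond /=.
apply: eq_big_seq => b bs; rewrite count_map.
have -> : has (box_before^~ b) s = has (box_before^~ b) (rem b s).
  by rewrite (perm_has _ (perm_to_rem bs)) /= box_before_irr.
transitivity (count (fun t => ~~ has (box_before^~ b) (rem b s) && standard_order t)
                    (permutations (rem b s))).
  apply: eq_in_count => t; rewrite mem_permutations => pt /=.
  rewrite standard_order_cons; last by rewrite (perm_mem pt) mem_rem_uniqF.
  by rewrite (perm_has _ pt).
by case: (has _ _) => /=; [rewrite count_pred0 | apply: eq_count].
Qed.

End StandardOrders.

Section SkewTableaux.

Implicit Types (l m : seq nat) (i : nat) (x : nat * nat).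

Definition addable l m i : bool := strict (incr_nth m i) && contains l (incr_nth m i).

Lemma addable_size l m i : strict m -> addable l m i -> (i <= size m)%N.
Proof. by move=> sm /andP[]; rewrite strict_incr_nth // => /andP[]. Qed.

Lemma minimal_skew_box l m x : strict l -> strict m -> contains l m ->
  x \in skew_boxes l m -> ~~ has (box_before^~ x) (skew_boxes l m) ->
  exists2 i, addable l m i & x = next_box m i.
Proof.
move=> sl sm /containsP clm + /hasPn hmin; rewrite mem_skew_boxes !mem_boxes.
case: x hmin => [[|i] c] hmin // /andP[/and3P[_ h1 h2] h3]; rewrite /= in h1 h2 h3.
have hc : c = (i.+2 + part m i)%N.
  apply/eqP; rewrite eqn_leq; apply/andP; split; last lia.
  rewrite leqNgt; apply/negP => hlt; have := hmin (i.+1, c.-1).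
  rewrite mem_skew_boxes !mem_boxes /= /box_before /= eqxx /=.
  by move=> /(_ _)/negP; apply; lia.
have hrow : (i == 0%N) || ((part m i).+1 < part m i.-1)%N.
  case: (posnP i) => [->//|ip]; rewrite /= ltnNge; apply/negP => hle.
  have li : (i < size l)%N by rewrite -strict_part_gt0 //; lia.
  have := strictP _ sl i.-1; rewrite prednK // => /(_ (ltnW li)) hli.
  have := hmin (i, c); rewrite mem_skew_boxes !mem_boxes /= /box_before /= eqxx ltnSn /= !orbT.
  by move=> /(_ _)/negP; apply; lia.
have his : (i <= size m)%N.
  rewrite leqNgt; apply/negP => hlt.
  by move: hrow; rewrite (part_default (ltnW hlt)) (part_default (l:=m) (i:=i.-1)); lia.
exists i; last by rewrite hc.
rewrite /addable strict_incr_nth // his hrow /=; apply/containsP => j.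
rewrite part_incr_nth; case: (eqVneq i j) => [<-|ne]; [lia | exact: clm].
Qed.

Lemma next_box_minimal l m i : strict m -> addable l m i ->
  (next_box m i \in skew_boxes l m) && ~~ has (box_before^~ (next_box m i)) (skew_boxes l m).
Proof.
move=> sm ad; have his := addable_size sm ad.
case/andP: ad => si /containsP ci.
have cii := ci i; rewrite part_incr_nth eqxx in cii.
move: si; rewrite strict_incr_nth // => /andP[_ hrow].
rewrite mem_skew_boxes !mem_boxes /= -andbA; apply/and3P; split; [lia | lia |].
apply/hasPn => -[[|j] c']; rewrite mem_skew_boxes !mem_boxes /= /box_before /= //.
case/andP => /andP[h1 h2] h3.
apply/negP => /orP[/andP[/eqP [ej] hc]|/andP[/eqP ec hj]].
  by move: h3 hc; rewrite ej; lia.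
have ip : (0 < i)%N by lia.
move: hrow; rewrite (negbTE (lt0n_neq0 ip)) /= => hrow.
have sp : (i.-1 < size m)%N by rewrite -strict_part_gt0 //; lia.
have hji : (j <= i.-1)%N by lia.
by have := strict_part_gap sm hji sp; lia.
Qed.

Lemma minimal_skew_boxes l m : strict l -> strict m -> contains l m ->
  perm_eq [seq b <- skew_boxes l m | ~~ has (box_before^~ b) (skew_boxes l m)]
          (map (next_box m) [seq i <- iota 0 (size m).+1 | addable l m i]).
Proof.
move=> sl sm clm; apply: uniq_perm.
- exact: filter_uniq (skew_boxes_uniq _ _).
- by rewrite map_inj_uniq ?filter_uniq ?iota_uniq // => i j [].
move=> x; rewrite mem_filter andbC; apply/idP/mapP.
  case/andP => xs xmin; have [i ad ->] := minimal_skew_box sl sm clm xs xmin.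
  by exists i; rewrite // mem_filter ad mem_iota ltnS (addable_size sm ad).
by case=> i; rewrite mem_filter => /andP[ad _] ->; apply: next_box_minimal.
Qed.

Lemma nsyt_rec l m : strict l -> strict m -> contains l m -> (psize m < psize l)%N ->
  nsyt l m = (\sum_(i <- iota 0 (size m).+1 | addable l m i) nsyt l (incr_nth m i))%N.
Proof.
move=> sl sm clm hlt.
rewrite /nsyt count_standard_permutations ?skew_boxes_uniq ?skew_boxes_neq_nil //.
rewrite -big_filter (perm_big _ (minimal_skew_boxes sl sm clm)) big_map big_filter.
by apply: eq_bigr => i _; apply/permP/perm_permutations/skew_boxes_incr_nth.
Qed.

End SkewTableaux.

Section Enumeration.

Implicit Types (l t : seq nat) (k x N : nat).

Lemma mem_map_cons k (S : seq (seq nat)) x t :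
  (x :: t \in map (cons k) S) = (x == k) && (t \in S).
Proof.
case: (eqVneq x k) => [->|ne]; first by rewrite mem_map // => a b [].
by apply/mapP => -[t' _ [e _]]; move: ne; rewrite e eqxx.
Qed.

Lemma mem_sp_bounded k N l :
  (l \in sp_bounded k N) = [&& strict l, all (fun y => y <= k)%N l & sumn l == N].
Proof.
elim: k N l => [|k IH] N [|x t] /=.
- by case: N.
- by case: ifP => _; rewrite ?inE //; case: x => [|x]; rewrite /strict /= ?andbF.
- rewrite mem_cat IH /=; case: ifP => _; rewrite ?orbF //.
  by case: (0 == N) => //=; apply/mapP => -[].
rewrite mem_cat IH; case: (boolP (strict (x :: t))) => [sxt|nsxt] /=; last first.
  case: ifP => _; rewrite ?in_nil // mem_map_cons IH.
  apply/negP => /and4P[/eqP ex st tk _]; move: nsxt; rewrite strict_cons st andbT.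
  by rewrite ex; case: t tk {st IH} => [|y t] //= /andP[yk _]; rewrite ltnS yk.
have le_all j : (x <= j.+1)%N -> all (leq^~ j) t.
  by move=> h; apply/allP => y /(allP (strict_all_lt sxt)) /=; lia.
have [hx|hx|ex] := ltngtP x k.+1.
- rewrite -ltnS hx !le_all ?(ltnW hx) ?(leqW (ltnW hx)) //=.
  by case: ifP => _; rewrite ?in_nil ?mem_map_cons ?(ltn_eqF hx) ?orbF.
- rewrite leqNgt (ltnW hx) /=.
  by case: ifP => _; rewrite ?in_nil ?mem_map_cons ?(gtn_eqF hx).
have st : strict t by move: sxt; rewrite strict_cons => /andP[].
have tk : all (leq^~ k) t by rewrite le_all ?ex.
rewrite tk le_all ?ex // {le_all sxt}; subst x; rewrite ltnn /=.
by case: ifP => hk; rewrite ?in_nil ?mem_map_cons ?eqxx ?IH ?st ?tk /=; lia.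
Qed.

Lemma sp_bounded_uniq k N : uniq (sp_bounded k N).
Proof.
elim: k N => [|k IH] N /=; first by case: (N == 0%N).
rewrite cat_uniq IH /=; case: ifP => //= _.
rewrite map_inj_uniq ?IH ?andbT; last by move=> a b [].
by apply/hasPn => l /mapP [t _ ->]; rewrite mem_sp_bounded /= ltnn andbF.
Qed.

Lemma mem_strict_parts N l : (l \in strict_parts N) = strict l && (psize l == N).
Proof.
rewrite /strict_parts mem_sp_bounded /psize; case: (boolP (strict l)) => //= sl.
case: (eqVneq (sumn l) N) => [<-|]; rewrite ?andbF ?andbT //.
by apply/allP; elim: l {sl} => // y t IHt z; rewrite inE => /orP[/eqP->|/IHt] /=; lia.
Qed.

End Enumeration.

Local Open Scope ring_scope.

Section IteratedOperators.

Variables (T : Type) (R : comRingType).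
Implicit Types (A : (T -> R) -> T -> R) (c : R) (u : nat -> R).

Definition sum_linear A := forall (r : seq nat) (a : nat -> R) (h : nat -> T -> R) x,
  A (fun y => \sum_(k <- r) a k * h k y) x = \sum_(k <- r) a k * A (h k) x.

Lemma binomial_sum_recurrence c u n :
  \sum_(0 <= k < n.+2) 'C(n.+1, k)%:R * c ^+ (n.+1 - k) * u k =
  \sum_(0 <= k < n.+1) 'C(n, k)%:R * c ^+ (n - k) * u k.+1
  + c * \sum_(0 <= k < n.+1) 'C(n, k)%:R * c ^+ (n - k) * u k.
Proof.
have shift_c : c * \sum_(0 <= k < n.+1) 'C(n, k)%:R * c ^+ (n - k) * u k =
    c ^+ n.+1 * u 0%N + \sum_(0 <= k < n) 'C(n, k.+1)%:R * c ^+ (n - k) * u k.+1.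
  rewrite big_nat_recl // bin0 subn0 mulrDr exprS mul1r mulrA; congr (_ + _).
  rewrite mulr_sumr big_nat_cond [RHS]big_nat_cond; apply: eq_bigr => k /andP[/andP[_ hk] _].
  by rewrite subnS -[(n - k)%N]prednK ?subn_gt0 // exprS /=; ring.
have pascal : \sum_(0 <= k < n.+2) 'C(n.+1, k)%:R * c ^+ (n.+1 - k) * u k =
    c ^+ n.+1 * u 0%N + \sum_(0 <= k < n.+1) 'C(n, k.+1)%:R * c ^+ (n - k) * u k.+1
    + \sum_(0 <= k < n.+1) 'C(n, k)%:R * c ^+ (n - k) * u k.+1.
  rewrite big_nat_recl // bin0 subn0 mul1r -addrA -big_split /=; congr (_ + _).
  by apply: eq_bigr => k _; rewrite binS natrD subSS !mulrDl.
rewrite pascal shift_c big_nat_recr //= bin_small // !mul0r addr0; ring.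
Qed.

Lemma iter_binomial A c : sum_linear A -> forall n g x,
  iter n (fun h y => A h y + c * h y) g x =
  \sum_(0 <= k < n.+1) 'C(n, k)%:R * c ^+ (n - k) * iter k A g x.
Proof.
move=> Alin; elim=> [|n IH] g x; first by rewrite big_nat1 /= bin0 expr0 !mul1r.
rewrite iterS (functional_extensionality _ _ (IH g)) Alin.
by rewrite (binomial_sum_recurrence c (fun k => iter k A g x)).
Qed.

End IteratedOperators.

Section BinomialPolynomial.

Variable R : numFieldType.

Definition binomial_poly k : {poly R} :=
  (k`!%:R)^-1 *: \prod_(j <- iota 0 k) ('X - (j%:R)%:P).

Lemma size_binomial_poly k : size (binomial_poly k) = k.+1.
Proof.
rewrite size_scale ?size_prod_XsubC ?size_iota //.
by rewrite invr_eq0 pnatr_eq0 -lt0n fact_gt0.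
Qed.

Lemma prod_natrB_iota n k : \prod_(j <- iota 0 k) (n%:R - j%:R : R) = (n ^_ k)%:R.
Proof.
elim: k => [|k IH]; first by rewrite big_nil.
rewrite ffactnSr natrM -addn1 iotaD big_cat big_seq1 IH add0n.
by case: (leqP k n) => h; [rewrite natrB | rewrite ffact_small //= !mul0r].
Qed.

Lemma binomial_polyE k n : (binomial_poly k).[n%:R] = 'C(n, k)%:R.
Proof.
rewrite hornerZ horner_prod; under eq_bigr do rewrite hornerXsubC.
rewrite prod_natrB_iota -bin_ffact natrM mulrC mulfK //.
by rewrite pnatr_eq0 -lt0n fact_gt0.
Qed.

Lemma binomial_combination_poly (a : nat -> R) r :
  exists2 p : {poly R}, (size p <= r)%N &
    forall n, p.[n%:R] = \sum_(0 <= k < r) 'C(n, k)%:R * a k.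
Proof.
exists (\sum_(0 <= k < r) a k *: binomial_poly k).
  rewrite big_nat_cond; apply: (big_ind (fun q : {poly R} => (size q <= r)%N)).
  - by rewrite size_poly0.
  - by move=> p q hp hq; apply: leq_trans (size_polyD _ _) _; rewrite geq_max hp hq.
  move=> k /andP[/andP[_ hk] _]; apply: leq_trans (size_scale_leq _ _) _.
  by rewrite size_binomial_poly.
move=> n; rewrite horner_sum; apply: eq_bigr => k _.
by rewrite hornerZ binomial_polyE mulrC.
Qed.

End BinomialPolynomial.

Section UpOperator.

Implicit Types (g h : seq nat -> C) (l m p : seq nat).

Definition Uop g l : C := \sum_(l' <- add_box l) (2%:R : C) ^ weight l' l * g l'.

Lemma add_box_size l l' : l' \in add_box l -> (size l' == size l) = ~~ (size l < size l')%N.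
Proof.
rewrite mem_filter => /andP[_ /mapP [i + ->]]; rewrite mem_iota ltnS => /andP[_ hi].
by rewrite size_incr_nth; case: ltnP => hi'; rewrite ?eqxx ?ltnn //; lia.
Qed.

Lemma weight_add_box l l' : l' \in add_box l -> weight l' l = (size l' == size l)%:Z.
Proof.
rewrite mem_filter => /andP[_ /mapP [i + ->]]; rewrite mem_iota ltnS => /andP[_ hi].
rewrite /weight /plen psize_incr_nth size_incr_nth; case: ltnP => hi'.
  by rewrite eqxx /=; lia.
by rewrite gtn_eqF //=; lia.
Qed.

Lemma Dop_Uop g l : Dop g l = Uop g l - g l.
Proof.
rewrite /Dop /Uop [in RHS](bigID (fun l' => size l < size l')%N) /=; congr (_ + _ - _).
  rewrite big_seq_cond [RHS]big_seq_cond; apply: eq_bigr => l' /andP[/weight_add_box -> hl].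
  by rewrite (gtn_eqF hl) expr0z mul1r.
rewrite mulr_sumr big_seq_cond [RHS]big_seq_cond.
apply: eq_big => [l'|l' /andP[/weight_add_box -> ->]]; last by rewrite expr1z.
by case: (boolP (l' \in add_box l)) => //= /add_box_size.
Qed.

Lemma Uop_sum_linear : sum_linear Uop.
Proof.
move=> r a h x; rewrite /Uop; under eq_bigr do rewrite mulr_sumr.
rewrite exchange_big; apply: eq_bigr => k _; rewrite mulr_sumr.
by apply: eq_bigr => l' _; rewrite mulrCA.
Qed.

Lemma Dop_sum_linear : sum_linear Dop.
Proof.
move=> r a h x; rewrite Dop_Uop Uop_sum_linear.
by under [RHS]eq_bigr do rewrite Dop_Uop mulrBr; rewrite sumrB.
Qed.

Lemma Uop_DopE : (fun h x => Dop h x + 1 * h x) = Uop.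
Proof. by do 2!apply: functional_extensionality => ?; rewrite Dop_Uop mul1r subrK. Qed.

Lemma Dop_UopE : (fun h x => Uop h x + (-1) * h x) = Dop.
Proof. by do 2!apply: functional_extensionality => ?; rewrite Dop_Uop mulN1r. Qed.

Lemma weightD l m p : weight l m = weight l p + weight p m.
Proof. by rewrite /weight; ring. Qed.

Lemma Ssum0 g m : strict m -> Ssum g m 0 = g m.
Proof.
move=> sm; rewrite /Ssum addn0 -big_filter.
have only_m : perm_eq [seq l <- strict_parts (psize m) | contains l m] [:: m].
  apply: uniq_perm; rewrite ?filter_uniq ?sp_bounded_uniq // => l.
  rewrite mem_filter mem_strict_parts inE.
  apply/idP/eqP => [/and3P[clm sl /eqP]|->]; first exact: contains_psize_eq.
  by rewrite contains_refl sm eqxx.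
rewrite (perm_big _ only_m) big_seq1 /nsyt skew_boxes_id.
have -> : weight m m = 0 by rewrite /weight; lia.
by rewrite expr0z /= !mul1r.
Qed.

Lemma Ssum_iter_Uop g n m : strict m -> Ssum g m n = iter n Uop g m.
Proof.
elim: n m => [|n IH] m sm; first exact: Ssum0.
rewrite iterS /Uop /add_box big_filter big_map big_mkcond /= /Ssum big_seq_cond.
under eq_bigr => l /andP[+ clm].
  rewrite mem_strict_parts => /andP[sl /eqP pl].
  rewrite (nsyt_rec sl sm clm); last by rewrite pl; lia.
  rewrite natr_sum mulr_sumr mulr_suml big_mkcond /=.
  over.
rewrite exchange_big /=; apply: eq_bigr => i _.
case: (boolP (strict (incr_nth m i))) => si; last first.
  by apply: big1 => l _; rewrite /addable (negbTE si).
rewrite -(IH _ si) /Ssum mulr_sumr psize_incr_nth addSnnS -big_mkcondr.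
rewrite [RHS]big_seq_cond; apply: eq_big => l.
  rewrite /addable si /=; case: (l \in _) => //=.
  case: (boolP (contains l (incr_nth m i))) => h; rewrite ?andbT ?andbF //.
  exact: contains_trans h (contains_incr_nth _ _).
have unit2 : (2%:R : C) \is a GRing.unit by rewrite unitfE pnatr_eq0.
by move=> _; rewrite (weightD l m (incr_nth m i)) exprzDr //; ring.
Qed.

End UpOperator.

Lemma Dop_vanish (h : seq nat -> C) :
  (forall l, strict l -> h l = 0) -> forall l, strict l -> Dop h l = 0.
Proof.
move=> h0 l sl; rewrite /Dop h0 // subr0.
by rewrite !big1_seq ?mulr0 ?addr0 // => l' /andP[_]; rewrite mem_filter => /andP[/h0].
Qed.

Lemma Dpow_vanish (g : seq nat -> C) r :
  (forall l, strict l -> Dpow r g l = 0) ->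
  forall k l, (r <= k)%N -> strict l -> Dpow k g l = 0.
Proof.
move=> hr k l hk; rewrite /Dpow -(subnK hk) iterD.
by elim: (k - r)%N l => [|j IH] l sl //=; [exact: hr | exact: Dop_vanish].
Qed.

Lemma big_nat_vanish_eq (R : nmodType) (F : nat -> R) a b :
  (forall k, (a <= k)%N -> F k = 0) -> (forall k, (b <= k)%N -> F k = 0) ->
  \sum_(0 <= k < a) F k = \sum_(0 <= k < b) F k.
Proof.
wlog ab : a b / (a <= b)%N.
  by move=> wlog_ab ha hb; case: (leqP a b) => [|/ltnW] ab; [|symmetry]; apply: wlog_ab.
move=> ha _; rewrite [RHS](big_cat_nat (leq0n a) ab) /= [X in _ + X]big_nat_cond.
by rewrite [X in _ + X]big1 ?addr0 // => k /andP[/andP[ak _] _]; exact: ha.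
Qed.

Lemma Ssum_Dpow (g : seq nat -> C) mu n : strict mu ->
  Ssum g mu n = \sum_(0 <= k < n.+1) 'C(n, k)%:R * Dpow k g mu.
Proof.
move=> smu; rewrite Ssum_iter_Uop // -Uop_DopE (iter_binomial 1 Dop_sum_linear).
by apply: eq_bigr => k _; rewrite expr1n mulr1.
Qed.

Lemma Dpow_Ssum (g : seq nat -> C) mu n : strict mu ->
  Dpow n g mu = \sum_(0 <= k < n.+1) (-1) ^+ (n + k) * 'C(n, k)%:R * Ssum g mu k.
Proof.
move=> smu; rewrite /Dpow -Dop_UopE (iter_binomial (-1) Uop_sum_linear).
rewrite big_nat_cond [RHS]big_nat_cond; apply: eq_bigr => k /andP[/andP[_ hk] _].
rewrite Ssum_iter_Uop // -signr_odd -[(-1) ^+ (n - k)]signr_odd oddD oddB //.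
by rewrite [_ * (-1) ^+ _]mulrC.
Qed.

Unset Implicit Arguments.

Theorem theorem2p3 (g : seq nat -> C) (mu : seq nat) (Hmu : strict mu) :
  (forall n : nat,
     Ssum g mu n = \sum_(0 <= k < n.+1) ('C(n, k))%:R * Dpow k g mu
     /\
     Dpow n g mu = \sum_(0 <= k < n.+1)
                     (-1) ^+ (n + k) * ('C(n, k))%:R * Ssum g mu k)
  /\
  (forall r : nat, (0 < r)%N ->
     (forall l : seq nat, strict l -> Dpow r g l = 0) ->
     exists p : {poly C}, (size p <= r)%N /\ forall n : nat, Ssum g mu n = p.[n%:R]).
Proof.
split=> [n|r _ hr]; first by split; [exact: Ssum_Dpow | exact: Dpow_Ssum].
have [p size_p p_val] := binomial_combination_poly (fun k => Dpow k g mu) r.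
exists p; split=> // n; rewrite p_val Ssum_Dpow //.
apply: big_nat_vanish_eq => k hk; first by rewrite bin_small // mul0r.
by rewrite (Dpow_vanish hr) // mulr0.
Qed.
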